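(* Let $\mathcal{T}^X$ be a stable projective tree of spheres marked by a finite set $X$, let $v$ and $v'$ be two distinct internal vertices of $T^X$, and let $(x_n)_n$ be a sequence of spheres marked by $X$ converging to $\mathcal{T}^X$ via isomorphisms $(\phi_n)_n$. Then the sequence of isomorphisms $\phi_{n,v'}\circ\phi_{n,v}^{-1}:\mathbb{S}_v\to\mathbb{S}_{v'}$ converges locally uniformly on $\mathbb{S}_v\setminus\{i_v(v')\}$ to the constant map with value $i_{v'}(v)$.
   Context: A tree is a finite connected graph without cycles (vertices $V$, edges $2$-element subsets of $V$, $E_v$ the set of edges containing $v$); leaves are valence-$1$ vertices, others internal; stable means every internal vertex has valence $\ge3$. For a vertex $v$ and $e\in E_v$, $B_v(e)$ is the connected component of the tree minus $v$ containing $e$. A projective tree of spheres $\mathcal{T}^X$ marked by a finite set $X$ ($\ge3$ elements) consists of a tree $T^X$ whose set of leaves is $X$ and, for each internal vertex $v$, a sphere $\mathbb{S}_v$ with a projective (complex) structure (a class of homeomorphisms to $\hat{\mathbb{C}}$ modulo Möbius transformations) and an injection $i_v:E_v\to\mathbb{S}_v$; for a vertex $v'\ne v$, $i_v(v'):=i_v(e)$ where $v'\in B_v(e)$; $a_v:X\to\mathbb{S}_v$ is $a_v(x)=i_v(x)$. A sphere marked by $X$ is an injection $x:X\to\hat{\mathbb{C}}$. A sequence $x_n$ converges to $\mathcal{T}^X$ via $(\phi_n)$ if for every internal vertex $v$ there are projective isomorphisms $\phi_{n,v}:\hat{\mathbb{C}}\to\mathbb{S}_v$ with $\phi_{n,v}\circ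 x_n\to a_v$ pointwise on $X$. *)

From HB Require Import structures.
From mathcomp Require Import all_boot all_algebra reals complex.
Set Implicit Arguments. Unset Strict Implicit. Unset Printing Implicit Defensive.
Import GRing.Theory Num.Theory.
Local Open Scope ring_scope.

(* [None] is the point at infinity. *)
Definition sphere (R : realType) := option R[i].

Definition sqmod (R : realType) (z : R[i]) : R :=
  complex.Re z ^+ 2 + complex.Im z ^+ 2.

(* chordal distance on \hat C (it induces the standard topology / uniform
   structure of the Riemann sphere) *)
Definition chord (R : realType) (z w : sphere R) : R :=
  match z, w with
  | Some a, Some b =>
      2 * Num.sqrt (sqmod (a - b)) /
      (Num.sqrt (1 + sqmod a) * Num.sqrt (1 + sqmod b))
  | Some a, None | None, Some a => 2 / Num.sqrt (1 + sqmod a)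
  | None, None => 0
  end.

Record moebius (R : realType) := Moebius {
  mob_a : R[i]; mob_b : R[i]; mob_c : R[i]; mob_d : R[i];
  mob_det : mob_a * mob_d - mob_b * mob_c != 0 }.

Definition mob_apply (R : realType) (m : moebius R) (z : sphere R) : sphere R :=
  let: Moebius a b c d _ := m in
  match z with
  | Some z => if c * z + d == 0 then None else Some ((a * z + b) / (c * z + d))
  | None => if c == 0 then None else Some (a / c)
  end.

Lemma mob_inv_det (R : realType) (m : moebius R) :
  mob_d m * mob_a m - (- mob_b m) * (- mob_c m) != 0.
Proof.
case: m => a b c d H /=. by rewrite mulrNN mulrC.
Qed.

Definition mob_inv (R : realType) (m : moebius R) : moebius R :=
  @Moebius R (mob_d m) (- mob_b m) (- mob_c m) (mob_a m) (mob_inv_det m).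

Definition simple_graph (V : finType) (e : rel V) : Prop :=
  symmetric e /\ irreflexive e.

Definition connected_graph (V : finType) (e : rel V) : Prop :=
  forall a b : V, connect e a b.

Definition acyclic_graph (V : finType) (e : rel V) : Prop :=
  forall p : seq V, uniq p -> (2 < size p)%N -> ~~ cycle e p.

Definition is_tree (V : finType) (e : rel V) : Prop :=
  [/\ simple_graph e, connected_graph e & acyclic_graph e].

Definition valence (V : finType) (e : rel V) (v : V) : nat := #|[set w | e v w]|.

Definition is_leaf (V : finType) (e : rel V) (v : V) : bool := valence e v == 1%N.
Definition is_internal (V : finType) (e : rel V) (v : V) : bool := ~~ is_leaf e v.

Definition stable_tree (V : finType) (e : rel V) : Prop :=
  forall v, is_internal e v -> (3 <= valence e v)%N.

Definition rel_minus (V : finType) (e : rel V) (v : V) : rel V :=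
  [rel a b | [&& e a b, a != v & b != v]].

(* v' lies in B_v(e), the component of T - v containing the edge {v, w}
   (w a neighbour of v). *)
Definition in_branch (V : finType) (e : rel V) (v w v' : V) : bool :=
  e v w && connect (rel_minus e v) w v'.

(* The marking set X is the set of leaves of the tree.  Each internal vertex v
   carries the sphere S_v, identified with \hat C (with its standard projective
   structure), and an injection i_v : E_v -> S_v, encoded as
   [i v w] for the edge {v, w}. *)
Definition edge_injections (R : realType) (V : finType) (e : rel V)
    (i : V -> V -> sphere R) : Prop :=
  forall v, is_internal e v ->
    forall w1 w2, e v w1 -> e v w2 -> i v w1 = i v w2 -> w1 = w2.

(* i_v(v') := i_v(edge) where v' lies in B_v(edge) *)
Definition ext_i (R : realType) (V : finType) (e : rel V)
    (i : V -> V -> sphere R) (v v' : V) : sphere R :=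
  match [pick w | in_branch e v w v'] with
  | Some w => i v w
  | None => None
  end.

(* a sphere marked by X: an injection X -> \hat C, encoded as a map on V that
   is injective on the leaves (values off X are irrelevant) *)
Definition marked_sphere (R : realType) (V : finType) (e : rel V)
    (x : V -> sphere R) : Prop :=
  forall a b, is_leaf e a -> is_leaf e b -> x a = x b -> a = b.

Definition sph_cvg (R : realType) (u : nat -> sphere R) (l : sphere R) : Prop :=
  forall eps : R, 0 < eps -> exists N : nat, forall n, (N <= n)%N -> chord (u n) l < eps.

Definition converges_via (R : realType) (V : finType) (e : rel V)
    (i : V -> V -> sphere R) (x : nat -> V -> sphere R)
    (phi : nat -> V -> moebius R) : Prop :=
  forall v, is_internal e v -> forall a, is_leaf e a ->
    sph_cvg (fun n => mob_apply (phi n v) (x n a)) (ext_i e i v a).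

Definition loc_unif_cvg_const (R : realType) (f : nat -> sphere R -> sphere R)
    (p c : sphere R) : Prop :=
  forall z, z <> p -> exists2 r : R, 0 < r &
    forall eps : R, 0 < eps -> exists N : nat, forall n, (N <= n)%N ->
      forall w, w <> p -> chord w z < r -> chord (f n w) c < eps.

(* Pick leaves a, b in two different branches at v, both away from v', and a
   leaf c in a branch at v' away from v.  Seen from S_v, the marked points
   a, b, c converge to i_v(a) <> i_v(b) and to i_v(c) = i_v(v'); seen from S_v'
   they converge to i_v'(v), i_v'(v) and i_v'(c) <> i_v'(v).  The chordal cross
   ratio of z, a, b, c is the same in both charts, so as long as z stays away
   from i_v(v'), the chordal distance from phi_v' (phi_v^-1 z) to the image of a
   is bounded by a constant times the distance between the images of a and b in
   S_v', which tends to 0. *)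

From HB Require Import structures.
From mathcomp Require Import all_boot all_order all_algebra reals complex ring lra zify.
Import Order.TTheory GRing.Theory Num.Theory.
Set Implicit Arguments. Unset Strict Implicit. Unset Printing Implicit Defensive.
Local Open Scope ring_scope.

Section Euclid3.
Variable R : realType.
Implicit Types p q r : R * R * R.

Definition sqdist3 p q : R :=
  (p.1.1 - q.1.1) ^+ 2 + (p.1.2 - q.1.2) ^+ 2 + (p.2 - q.2) ^+ 2.

Definition dist3 p q : R := Num.sqrt (sqdist3 p q).

Lemma sqdist3_ge0 p q : 0 <= sqdist3 p q.
Proof. by rewrite !addr_ge0 ?sqr_ge0. Qed.

Lemma dist3C p q : dist3 p q = dist3 q p.
Proof. by rewrite /dist3 /sqdist3; congr Num.sqrt; ring. Qed.

Lemma dist3_triangle p q r : dist3 p r <= dist3 p q + dist3 q r.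
Proof.
set s1 := dist3 p q; set s2 := dist3 q r.
have s1_ge0 : 0 <= s1 by rewrite sqrtr_ge0.
have s2_ge0 : 0 <= s2 by rewrite sqrtr_ge0.
rewrite -(ler_pXn2r (n := 2)) ?nnegrE ?sqrtr_ge0 ?addr_ge0 //.
rewrite sqr_sqrtr ?sqdist3_ge0 //.
have e1 : s1 ^+ 2 = sqdist3 p q by rewrite sqr_sqrtr ?sqdist3_ge0.
have e2 : s2 ^+ 2 = sqdist3 q r by rewrite sqr_sqrtr ?sqdist3_ge0.
case: p q r s1 s2 s1_ge0 s2_ge0 e1 e2 => [[a1 a2] a3] [[b1 b2] b3] [[c1 c2] c3] s1 s2.
rewrite /sqdist3 /= => s1_ge0 s2_ge0 e1 e2.
set X1 := a1 - b1; set X2 := a2 - b2; set X3 := a3 - b3.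
set Y1 := b1 - c1; set Y2 := b2 - c2; set Y3 := b3 - c3.
set dot := X1 * Y1 + X2 * Y2 + X3 * Y3.
(* Lagrange's identity gives Cauchy--Schwarz *)
have cauchy_schwarz : dot ^+ 2 <= (s1 * s2) ^+ 2.
  rewrite exprMn e1 e2.
  have -> : (X1 ^+ 2 + X2 ^+ 2 + X3 ^+ 2) * (Y1 ^+ 2 + Y2 ^+ 2 + Y3 ^+ 2) =
    dot ^+ 2 + ((X1 * Y2 - X2 * Y1) ^+ 2 + (X1 * Y3 - X3 * Y1) ^+ 2 +
                (X2 * Y3 - X3 * Y2) ^+ 2) by rewrite /dot; ring.
  by rewrite lerDl !addr_ge0 ?sqr_ge0.
have dot_le : dot <= s1 * s2.
  have s12_ge0 : 0 <= s1 * s2 by rewrite mulr_ge0.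
  have [dot_le0|dot_gt0] := lerP dot 0; first exact: le_trans dot_le0 s12_ge0.
  by rewrite -(ler_pXn2r (n := 2)) ?nnegrE ?(ltW dot_gt0).
have -> : (a1 - c1) ^+ 2 + (a2 - c2) ^+ 2 + (a3 - c3) ^+ 2 = s1 ^+ 2 + s2 ^+ 2 + 2 * dot.
  by rewrite e1 e2 /dot /X1 /X2 /X3 /Y1 /Y2 /Y3; ring.
nra.
Qed.

Lemma dist3_le2 p q : sqdist3 p 0 = 1 -> sqdist3 q 0 = 1 -> dist3 p q <= 2.
Proof.
case: p q => [[a1 a2] a3] [[b1 b2] b3]; rewrite /dist3 /sqdist3 /= !subr0 => np nq.
rewrite -(ler_pXn2r (n := 2)) ?nnegrE ?sqrtr_ge0 // sqr_sqrtr ?addr_ge0 ?sqr_ge0 //.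
have := sqr_ge0 (a1 + b1); have := sqr_ge0 (a2 + b2); have := sqr_ge0 (a3 + b3).
nra.
Qed.

End Euclid3.

Section ChordalMetric.
Variable R : realType.
Local Notation sph := (sphere R).
Implicit Types (u w : R[i]) (z y : sph).

Lemma sqmod_ge0 u : 0 <= sqmod u.
Proof. by rewrite addr_ge0 ?sqr_ge0. Qed.

Lemma sqmodM u w : sqmod (u * w) = sqmod u * sqmod w.
Proof. by case: u w => a b [c d]; rewrite /sqmod /=; ring. Qed.

Lemma sqmod_eq0 u : (sqmod u == 0) = (u == 0).
Proof.
case: u => a b; rewrite /sqmod /= paddr_eq0 ?sqr_ge0 // !sqrf_eq0.
by apply/andP/eqP => [[/eqP -> /eqP ->] | [-> ->]].
Qed.

Lemma sqmod_gt0 u : u != 0 -> 0 < sqmod u.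
Proof. by rewrite lt_def sqmod_eq0 sqmod_ge0 andbT. Qed.

Lemma sqmod0 : sqmod (0 : R[i]) = 0.
Proof. by apply/eqP; rewrite sqmod_eq0. Qed.

Lemma sqmod1 : sqmod (1 : R[i]) = 1.
Proof. by rewrite /sqmod /= expr0n /= addr0 expr1n. Qed.

Lemma sqmodN u : sqmod (- u) = sqmod u.
Proof. by case: u => a b; rewrite /sqmod /=; ring. Qed.

Lemma one_add_sqmod_gt0 u : 0 < 1 + sqmod u.
Proof. by rewrite ltr_pwDl ?sqmod_ge0. Qed.

Definition homog z : R[i] * R[i] := if z is Some a then (a, 1) else (1, 0).
Definition det2 (p q : R[i] * R[i]) := p.1 * q.2 - p.2 * q.1.
Definition sqnorm2 (p : R[i] * R[i]) := sqmod p.1 + sqmod p.2.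
Definition scale2 (l : R[i]) (p : R[i] * R[i]) := (l * p.1, l * p.2).

Lemma sqnorm2_scale l p : sqnorm2 (scale2 l p) = sqmod l * sqnorm2 p.
Proof. by rewrite /sqnorm2 /= !sqmodM -mulrDr. Qed.

Lemma det2_scale l k p q : det2 (scale2 l p) (scale2 k q) = l * k * det2 p q.
Proof. by rewrite /det2 /=; ring. Qed.

Lemma sqnorm2_homog_gt0 z : 0 < sqnorm2 (homog z).
Proof.
case: z => [a|]; rewrite /sqnorm2 /= sqmod1 ?sqmod0 ?addr0 ?ltr01 //.
by rewrite addrC one_add_sqmod_gt0.
Qed.

Lemma homog_scale_inj z y l : l != 0 -> homog z = scale2 l (homog y) -> z = y.
Proof.
move=> l_neq0; case: z y => [a|] [b|] [] /=; rewrite ?mulr1 ?mulr0.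
- by move=> -> <-; rewrite mul1r.
- by move=> _ /eqP; rewrite oner_eq0.
- by move=> _ /esym /eqP; rewrite (negbTE l_neq0).
- by [].
Qed.

Lemma chord_ge0 z y : 0 <= chord z y.
Proof. by case: z y => [a|] [b|]; rewrite /= ?divr_ge0 ?mulr_ge0 ?sqrtr_ge0. Qed.

Lemma sqr_chord_homog z y : chord z y ^+ 2 =
  4 * sqmod (det2 (homog z) (homog y)) / (sqnorm2 (homog z) * sqnorm2 (homog y)).
Proof.
have sqr_sqrt (t : R) : 0 <= t -> Num.sqrt t ^+ 2 = t by apply: sqr_sqrtr.
have pos := one_add_sqmod_gt0.
have neq0 u : sqmod u + 1 != 0 by rewrite addrC gt_eqF.
case: z y => [a|] [b|]; rewrite /= /det2 /sqnorm2 /= ?sqmod1 ?sqmod0 ?mulr1 ?mul1r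
  ?mulr0 ?mul0r ?(exprMn, exprVn) ?sqr_sqrt ?sqmod_ge0 ?(ltW (pos _)) //.
- by field; rewrite !neq0 ?gt_eqF.
- by rewrite sub0r sqmodN sqmod1 addr0; field; rewrite neq0 ?gt_eqF.
- by rewrite subr0 sqmod1 addr0; field; rewrite neq0 ?gt_eqF.
- by rewrite subr0 sqmod0 expr0n /= !mulr0 mul0r.
Qed.

(* Inverse stereographic projection onto the unit sphere of R^3. *)
Definition stereo z : R * R * R :=
  if z is Some a then
    (2 * complex.Re a / (1 + sqmod a), 2 * complex.Im a / (1 + sqmod a),
     (sqmod a - 1) / (1 + sqmod a))
  else (0, 0, 1).

Lemma stereo_unit z : sqdist3 (stereo z) 0 = 1.
Proof.
case: z => [[a b]|]; rewrite /sqdist3 /stereo /sqmod /= ?subr0.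
  by field; rewrite gt_eqF // ltr_pwDl ?addr_ge0 ?sqr_ge0.
by rewrite expr0n expr1n /= !add0r.
Qed.

Lemma chord_stereo z y : chord z y = dist3 (stereo z) (stereo y).
Proof.
apply/eqP; rewrite -(eqrXn2 (n := 2)) ?chord_ge0 ?sqrtr_ge0 //.
rewrite sqr_sqrtr ?sqdist3_ge0 // sqr_chord_homog; apply/eqP.
have pos (a b : R) : 1 + (a ^+ 2 + b ^+ 2) != 0.
  by rewrite gt_eqF // ltr_pwDl ?addr_ge0 ?sqr_ge0.
case: z y => [[x1 y1]|] [[x2 y2]|];
  rewrite /det2 /sqnorm2 /sqdist3 /stereo /sqmod /= !expr1n !expr0n /= ?addr0.
all: by field; rewrite ?pos.
Qed.

Lemma chordC z y : chord z y = chord y z.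
Proof. by rewrite !chord_stereo dist3C. Qed.

Lemma chord_triangle z y t : chord z t <= chord z y + chord y t.
Proof. by rewrite !chord_stereo dist3_triangle. Qed.

Lemma chord_le2 z y : chord z y <= 2.
Proof. by rewrite chord_stereo dist3_le2 ?stereo_unit. Qed.

Lemma chord_gt0 z y : z <> y -> 0 < chord z y.
Proof.
move=> z_neq_y; have det_neq0 : det2 (homog z) (homog y) != 0.
  case: z y z_neq_y => [a|] [b|] //= ab_neq;
    rewrite /det2 /= ?mulr1 ?mul1r ?mulr0 ?mul0r ?sub0r ?subr0 ?oppr_eq0 ?oner_eq0 //.
  by rewrite subr_eq0; apply: contra_not_neq ab_neq => ->.
rewrite lt_def chord_ge0 andbT -sqrf_eq0 sqr_chord_homog.
by rewrite !mulf_neq0 ?invr_neq0 ?mulf_neq0 ?pnatr_eq0 ?gt_eqF ?sqnorm2_homog_gt0 ?sqmod_gt0.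
Qed.

End ChordalMetric.

Section MoebiusChord.
Variable R : realType.
Local Notation sph := (sphere R).
Implicit Types (m : moebius R) (z y : sph).

Definition mob_lin m (p : R[i] * R[i]) :=
  (mob_a m * p.1 + mob_b m * p.2, mob_c m * p.1 + mob_d m * p.2).

Definition mob_determinant m := mob_a m * mob_d m - mob_b m * mob_c m.

Lemma mob_determinant_neq0 m : mob_determinant m != 0.
Proof. by case: m. Qed.

Lemma mob_apply_homog m z :
  exists2 l : R[i], l != 0 & homog (mob_apply m z) = scale2 l (mob_lin m (homog z)).
Proof.
case: m => a b c d det_neq0; case: z => [z|] /=; rewrite /mob_lin /scale2 /= ?mulr1 ?mulr0 ?addr0.
- have [cz_eq0|cz_neq0] := eqVneq (c * z + d) 0; last first.
    by exists (c * z + d)^-1; rewrite ?invr_eq0 // mulVf // mulrC.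
  have az_neq0 : a * z + b != 0.
    apply: contra det_neq0 => /eqP az_eq0; apply/eqP.
    have -> : b = - (a * z) by rewrite -(addKr (a * z) b) az_eq0 addr0.
    have -> : d = - (c * z) by rewrite -(addKr (c * z) d) cz_eq0 addr0.
    ring.
  by exists (a * z + b)^-1; rewrite ?invr_eq0 // cz_eq0 mulr0 mulVf.
- have [c_eq0|c_neq0] := eqVneq c 0; last first.
    by exists c^-1; rewrite ?invr_eq0 // mulVf // mulrC.
  have a_neq0 : a != 0.
    by apply: contra det_neq0 => /eqP ->; rewrite c_eq0 !mul0r mulr0 subrr.
  by exists a^-1; rewrite ?invr_eq0 // c_eq0 mulr0 mulVf.
Qed.

Lemma mob_invK m : cancel (mob_apply (mob_inv m)) (mob_apply m).
Proof.
move=> z; have [l1 l1_neq0 e1] := mob_apply_homog (mob_inv m) z.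
have [l2 l2_neq0 e2] := mob_apply_homog m (mob_apply (mob_inv m) z).
apply: (@homog_scale_inj _ _ _ (l2 * l1 * mob_determinant m)).
  by rewrite !mulf_neq0 ?mob_determinant_neq0.
rewrite {}e2 {}e1; case: m {l1_neq0 l2_neq0} => a b c d det_neq0.
by rewrite /mob_lin /scale2 /mob_determinant /=; congr (_, _); ring.
Qed.

Lemma sqnorm2_mob_lin_gt0 m z : 0 < sqnorm2 (mob_lin m (homog z)).
Proof.
have [l l_neq0 e] := mob_apply_homog m z.
have := sqnorm2_homog_gt0 (mob_apply m z).
by rewrite e sqnorm2_scale pmulr_rgt0 ?sqmod_gt0.
Qed.

Definition mob_dilation m z := sqnorm2 (homog z) / sqnorm2 (mob_lin m (homog z)).

Lemma sqr_chord_mob m z y : chord (mob_apply m z) (mob_apply m y) ^+ 2 =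
  sqmod (mob_determinant m) * mob_dilation m z * mob_dilation m y * chord z y ^+ 2.
Proof.
rewrite !sqr_chord_homog.
have [l1 l1_neq0 ->] := mob_apply_homog m z.
have [l2 l2_neq0 ->] := mob_apply_homog m y.
have := sqnorm2_mob_lin_gt0 m z; have := sqnorm2_mob_lin_gt0 m y.
have := sqnorm2_homog_gt0 z; have := sqnorm2_homog_gt0 y.
have := sqmod_gt0 l1_neq0; have := sqmod_gt0 l2_neq0.
rewrite !sqnorm2_scale det2_scale.
have -> : det2 (mob_lin m (homog z)) (mob_lin m (homog y)) =
    mob_determinant m * det2 (homog z) (homog y).
  by rewrite /det2 /mob_lin /mob_determinant /=; ring.
rewrite !sqmodM /mob_dilation => *; field.
by rewrite !gt_eqF.
Qed.

End MoebiusChord.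

Section CrossRatio.
Variables (R : realType) (f g : moebius R) (z ya yb yc : sphere R).
Local Notation gz := (mob_apply g z).
Local Notation ga := (mob_apply g ya).
Local Notation gb := (mob_apply g yb).
Local Notation gc := (mob_apply g yc).
Local Notation fz := (mob_apply f z).
Local Notation fa := (mob_apply f ya).
Local Notation fb := (mob_apply f yb).
Local Notation fc := (mob_apply f yc).

(* Moebius invariance of the chordal cross ratio, read at the images under [f] and [g]. *)
Lemma chord_cross_ratio_mob : chord gz ga * chord gb gc * (chord fz fc * chord fb fa) =
  chord gz gc * chord gb ga * (chord fz fa * chord fb fc).
Proof.
apply/eqP; rewrite -(eqrXn2 (n := 2)) ?mulr_ge0 ?chord_ge0 //.
by rewrite !exprMn !sqr_chord_mob; apply/eqP; ring.
Qed.

Lemma chord_cross_ratio_le :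
  chord gz ga * (chord gb gc * chord fz fc * chord fb fa) <= 8 * chord gb ga.
Proof.
have -> : chord gz ga * (chord gb gc * chord fz fc * chord fb fa) =
    chord gz ga * chord gb gc * (chord fz fc * chord fb fa) by ring.
rewrite chord_cross_ratio_mob.
have -> : 8 * chord gb ga = chord gb ga * (2 * (2 * 2)) by ring.
rewrite [_ * chord gb ga]mulrC -mulrA ler_wpM2l ?chord_ge0 //.
by rewrite !ler_pM ?mulr_ge0 ?chord_ge0 ?chord_le2.
Qed.

End CrossRatio.

Definition eventually (P : nat -> Prop) := exists N, forall n, (N <= n)%N -> P n.

Lemma eventually_and (P Q : nat -> Prop) :
  eventually P -> eventually Q -> eventually (fun n => P n /\ Q n).
Proof.
move=> [N1 P_N1] [N2 Q_N2]; exists (maxn N1 N2) => n.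
by rewrite geq_max => /andP[n1 n2]; split; [apply: P_N1 | apply: Q_N2].
Qed.

Section SphereConvergence.
Variable R : realType.
Local Notation sph := (sphere R).
Implicit Types (u v : nat -> sph) (l m : sph).

Lemma sph_cvg_apart u v l m : l <> m -> sph_cvg u l -> sph_cvg v m ->
  eventually (fun n => chord l m / 2 <= chord (u n) (v n)).
Proof.
move=> l_neq_m u_l v_m; have d_gt0 := chord_gt0 l_neq_m.
have q_gt0 : 0 < chord l m / 4 by rewrite divr_gt0.
have [N uv_near] := eventually_and (u_l _ q_gt0) (v_m _ q_gt0).
exists N => n /uv_near[un_l vn_m].
have := chord_triangle l (u n) m; have := chord_triangle (u n) (v n) m.
rewrite (chordC l (u n)); lra.
Qed.

Lemma sph_cvg_close u v l eps : 0 < eps -> sph_cvg u l -> sph_cvg v l ->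
  eventually (fun n => chord (u n) (v n) < eps).
Proof.
move=> eps_gt0 u_l v_l; have h_gt0 : 0 < eps / 2 by rewrite divr_gt0.
have [N uv_near] := eventually_and (u_l _ h_gt0) (v_l _ h_gt0).
exists N => n /uv_near[un_l vn_l].
have := chord_triangle (u n) l (v n); rewrite (chordC l (v n)); lra.
Qed.

End SphereConvergence.

Section MoebiusCvg.
Variables (R : realType) (f g : nat -> moebius R) (ya yb yc : nat -> sphere R).
Variables (al be ga de ep : sphere R).
Hypotheses (al_neq_be : al <> be) (de_neq_ep : de <> ep).
Hypotheses (fa_al : sph_cvg (fun n => mob_apply (f n) (ya n)) al)
           (fb_be : sph_cvg (fun n => mob_apply (f n) (yb n)) be)
           (fc_ga : sph_cvg (fun n => mob_apply (f n) (yc n)) ga)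
           (ga_de : sph_cvg (fun n => mob_apply (g n) (ya n)) de)
           (gb_de : sph_cvg (fun n => mob_apply (g n) (yb n)) de)
           (gc_ep : sph_cvg (fun n => mob_apply (g n) (yc n)) ep).

Lemma mob_comp_loc_unif_cvg :
  loc_unif_cvg_const (fun n => mob_apply (g n) \o mob_apply (mob_inv (f n))) ga de.
Proof.
move=> z z_neq_ga; set d := chord z ga; have d_gt0 : 0 < d by apply: chord_gt0.
exists (d / 2); first by rewrite divr_gt0.
move=> eps eps_gt0; set dbe := chord be al; set dde := chord de ep.
have dbe_gt0 : 0 < dbe by apply/chord_gt0/nesym.
have dde_gt0 : 0 < dde by apply: chord_gt0.
set K := dde * d * dbe; have K_gt0 : 0 < K by rewrite !mulr_gt0.
set eta := eps * K / 256; have eta_gt0 : 0 < eta by rewrite !divr_gt0 ?mulr_gt0.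
have d4_gt0 : 0 < d / 4 by rewrite divr_gt0.
have eps2_gt0 : 0 < eps / 2 by rewrite divr_gt0.
have [N near] := eventually_and (sph_cvg_apart (nesym al_neq_be) fb_be fa_al)
  (eventually_and (sph_cvg_apart de_neq_ep gb_de gc_ep)
  (eventually_and (fc_ga d4_gt0)
  (eventually_and (sph_cvg_close eta_gt0 gb_de ga_de)
                  (ga_de eps2_gt0)))).
exists N => n /near[fba [gbc [fc_near [gba_small ga_near]]]] w _ w_near.
set y := mob_apply (mob_inv (f n)) w.
have := chord_cross_ratio_le (f n) (g n) y (ya n) (yb n) (yc n).
rewrite /y mob_invK; set T := mob_apply (g n) _ => cross.
have wfc : d / 4 <= chord w (mob_apply (f n) (yc n)).
  have := chord_triangle z w ga; have := chord_triangle w (mob_apply (f n) (yc n)) ga.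
  rewrite (chordC z w) -/d; lra.
have lower : K / 16 <= chord (mob_apply (g n) (yb n)) (mob_apply (g n) (yc n)) *
    chord w (mob_apply (f n) (yc n)) * chord (mob_apply (f n) (yb n)) (mob_apply (f n) (ya n)).
  have -> : K / 16 = dde / 2 * (d / 4) * (dbe / 2) by rewrite /K; field.
  have := ltW dde_gt0; have := ltW d_gt0; have := ltW dbe_gt0 => ? ? ?.
  by apply: ler_pM; rewrite ?mulr_ge0 ?divr_ge0 ?invr_ge0 ?ler0n //;
    apply: ler_pM; rewrite ?divr_ge0 ?invr_ge0 ?ler0n.
have T_near : chord T (mob_apply (g n) (ya n)) < eps / 2.
  have := ler_wpM2l (chord_ge0 T (mob_apply (g n) (ya n))) lower.
  rewrite /eta in gba_small; rewrite -(ltr_pM2r K_gt0); nra.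
have := chord_triangle T (mob_apply (g n) (ya n)) de; lra.
Qed.

End MoebiusCvg.

Section TreeBranches.
Variables (V : finType) (e : rel V).
Hypothesis tree : is_tree e.

Local Notation linked x := (connect (rel_minus e x)).

Let e_sym : symmetric e. Proof. by case: tree => [[]]. Qed.
Let e_irr : irreflexive e. Proof. by case: tree => [[]]. Qed.

Lemma linkedC x a b : linked x a b = linked x b a.
Proof.
apply: sym_connect_sym => p q.
by rewrite /rel_minus /= e_sym; case: (e q p); rewrite //= andbC.
Qed.

Lemma linked_edge x a b : e a b -> a != x -> b != x -> linked x a b.
Proof. by move=> ab a_neq b_neq; apply: connect1; rewrite /rel_minus /= ab a_neq b_neq. Qed.

Lemma linked_from_self x y : linked x x y -> y = x.
Proof.
case/connectP => [[|c p]] /=; first by move=> _ ->.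
by rewrite /rel_minus /= eqxx andbF.
Qed.

Lemma path_minus_avoid x a p : path (rel_minus e x) a p -> all (fun t => t != x) p.
Proof. by elim: p a => [|b p IHp] a //= /andP[/and3P[_ _ ->] /IHp]. Qed.

Lemma path_minus_sub x a p : path (rel_minus e x) a p -> path e a p.
Proof. by apply: sub_path => p1 p2 /and3P[]. Qed.

Lemma path_minus_of_avoid x a p :
  path e a p -> all (fun t => t != x) (a :: p) -> path (rel_minus e x) a p.
Proof.
elim: p a => [|b p IHp] a //= /andP[ab bp] /and3P[a_neq b_neq p_avoid].
by rewrite /rel_minus /= ab a_neq b_neq /= IHp //= b_neq.
Qed.

Lemma neighbours_unlinked x y1 y2 : e x y1 -> e x y2 -> y1 != y2 -> ~~ linked x y1 y2.
Proof.
move=> xy1 xy2 y1_neq_y2; apply/negP => /connectP[p y1p y2_last].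
case: (shortenP y1p) y2_last => p' y1p' uniq_p' _ last_p'.
have p'_avoid := path_minus_avoid y1p'.
have y1_neq_x : y1 != x by apply: contraTneq xy1 => ->; rewrite e_irr.
have uniq_cycle : uniq (x :: y1 :: p').
  rewrite cons_uniq uniq_p' andbT inE negb_or eq_sym y1_neq_x /=.
  by apply/negP => /(allP p'_avoid); rewrite eqxx.
have size_cycle : (2 < size (x :: y1 :: p'))%N.
  case: p' last_p' {y1p' uniq_p' p'_avoid uniq_cycle} => //= y1_eq.
  by rewrite y1_eq eqxx in y1_neq_y2.
have [_ _ acyclic] := tree; apply: (negP (acyclic _ uniq_cycle size_cycle)).
by rewrite /= rcons_path xy1 (path_minus_sub y1p') /= -last_p' e_sym.
Qed.

Lemma exists_branch x y : y != x -> exists2 w, e x w & linked x w y.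
Proof.
have [_ connected _] := tree; case/connectP: (connected y x) => p.
elim: p y => [|b p IHp] y /=; first by move=> _ ->; rewrite eqxx.
case/andP => yb bp x_last y_neq_x.
have [b_eq_x|b_neq_x] := eqVneq b x.
  by exists y; [rewrite e_sym -b_eq_x | exact: connect0].
have [w xw wb] := IHp b bp x_last b_neq_x.
by exists w => //; apply: connect_trans wb _; rewrite linkedC linked_edge.
Qed.

Lemma linked_swap v v' a :
  a != v' -> v != v' -> ~~ linked v a v' -> linked v' a v.
Proof.
move=> a_neq v_neq_v'; have [_ connected _] := tree.
case/connectP: (connected a v) => p; elim: p a a_neq => [|b p IHp] a a_neq /=.
  by move=> _ -> _; apply: connect0.
case/andP => ab bp v_last a_unlinked.
have [->|a_neq_v] := eqVneq a v; first exact: connect0.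
have b_neq : b != v'.
  apply: contraNneq (a_unlinked) => b_eq.
  by rewrite -b_eq linked_edge // b_eq eq_sym.
have b_unlinked : ~~ linked v b v'.
  have [b_eq_v|b_neq_v] := eqVneq b v.
    by apply/negP; rewrite b_eq_v => /linked_from_self v'_eq; rewrite v'_eq eqxx in v_neq_v'.
  by apply: contra a_unlinked; apply: connect_trans; rewrite linked_edge.
by apply: connect_trans (IHp b b_neq bp v_last b_unlinked); rewrite linked_edge.
Qed.

Lemma path_end_leaf y s : path e y s -> uniq (y :: s) -> s != [::] ->
  (forall z, e y z -> z \in s) -> is_leaf e y.
Proof.
case: s => [//|z0 s] /= /andP[yz0 z0s] /andP[y_notin _] _ nbrs_in.
rewrite /is_leaf /valence (_ : [set w | e y w] = [set z0]) ?cards1 //.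
apply/setP => z; rewrite !inE; apply/idP/eqP => [yz|->//].
apply/eqP/negPn/negP; rewrite eq_sym => z0_neq_z.
have s_avoid : all (fun t => t != y) (z0 :: s).
  by apply/allP => t t_in; apply: contraNneq y_notin => <-.
move/negP: (neighbours_unlinked yz0 yz z0_neq_z); apply.
exact: path_connect (path_minus_of_avoid z0s s_avoid) _ (nbrs_in z yz).
Qed.

Lemma branch_leaf x w : e x w -> exists2 a, is_leaf e a & linked x w a.
Proof.
move=> xw; suff grow : forall k y s, (#|V| - size s <= k)%N -> path e y s -> uniq (y :: s) ->
    x \in s -> linked x w y -> exists2 a, is_leaf e a & linked x w a.
  have w_neq_x : w != x by apply: contraTneq xw => ->; rewrite e_irr.
  apply: (grow _ w [:: x]); rewrite /= ?leq_subr ?inE ?eqxx ?connect0 ?andbT //.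
  by rewrite e_sym xw.
elim=> [|k IHk] y s size_s ys uniq_ys x_in wy.
  have : (#|y :: s| <= #|V|)%N by apply: max_card.
  rewrite (card_uniqP uniq_ys) /= => size_lt; move: size_s.
  by rewrite leqn0 subn_eq0 => /(leq_trans size_lt); rewrite ltnn.
have [nbrs_in|] := boolP [forall z, e y z ==> (z \in s)].
  exists y => //; apply: path_end_leaf ys uniq_ys _ _; first by case: (s) x_in.
  by move=> z yz; apply: (implyP (forallP nbrs_in z)).
rewrite negb_forall => /existsP[z]; rewrite negb_imply => /andP[yz z_notin].
have z_notin' : z \notin y :: s.
  by rewrite inE negb_or z_notin andbT; apply: contraTneq yz => ->; rewrite e_irr.
apply: (IHk z (y :: s)); rewrite ?inE ?x_in ?orbT //=.
- by move: size_s; rewrite /=; lia.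
- by rewrite e_sym yz.
- by rewrite z_notin'.
- have y_notin : y \notin s by case/andP: uniq_ys.
  apply: connect_trans wy _; rewrite linked_edge //.
    by apply: contraNneq y_notin => ->.
  by apply: contraNneq z_notin => ->.
Qed.

Lemma branches_avoiding_gt1 v u : stable_tree e -> is_internal e v ->
  (1 < #|[set w | e v w && ~~ linked v w u]|)%N.
Proof.
move=> stable v_int; set N := [set w | e v w]; set A := [set w | e v w && ~~ linked v w u].
have N_A_le1 : (#|N :\: A| <= 1)%N.
  apply/card_le1_eqP => w1 w2; rewrite !inE /= !negb_and !negbK.
  move=> /andP[/orP[/negP//|w1u] vw1] /andP[/orP[/negP//|w2u] vw2].
  apply/eqP/negPn/negP; rewrite eq_sym => w12.
  move/negP: (neighbours_unlinked vw1 vw2 w12); apply.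
  by apply: connect_trans w1u _; rewrite linkedC.
have := cardsID A N; rewrite (setIidPr _); last by apply/subsetP => w; rewrite !inE => /andP[].
by have := stable v v_int; rewrite /valence -/N; lia.
Qed.

Lemma leaves_off_branch v u : stable_tree e -> is_internal e v ->
  exists a b, [/\ is_leaf e a, is_leaf e b, ~~ linked v a b, ~~ linked v a u & ~~ linked v b u].
Proof.
move=> stable v_int; have := branches_avoiding_gt1 u stable v_int.
case/card_gt1P => w1 [w2 []]; rewrite !inE => /andP[vw1 w1u] /andP[vw2 w2u] w12.
have [a a_leaf w1a] := branch_leaf vw1; have [b b_leaf w2b] := branch_leaf vw2.
exists a, b; split => //.
- apply: contra (neighbours_unlinked vw1 vw2 w12) => ab.
  by apply: connect_trans w1a (connect_trans ab _); rewrite linkedC.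
- by apply: contra w1u; apply: connect_trans.
- by apply: contra w2u; apply: connect_trans.
Qed.

End TreeBranches.

Lemma leaf_neq_internal (V : finType) (e : rel V) a v :
  is_leaf e a -> is_internal e v -> a != v.
Proof. by move=> a_leaf; apply: contraNneq => <-; rewrite a_leaf. Qed.

Section ExtendedInjections.
Variables (R : realType) (V : finType) (e : rel V) (i : V -> V -> sphere R).
Hypothesis tree : is_tree e.
Local Notation linked x := (connect (rel_minus e x)).

Lemma ext_i_linked v a b : linked v a b -> ext_i e i v a = ext_i e i v b.
Proof.
move=> ab; rewrite /ext_i (eq_pick (Q := fun w => in_branch e v w b)) // => w.
rewrite /in_branch; case: (e v w) => //=; apply/idP/idP => [wa|wb].
  exact: connect_trans wa ab.
by apply: connect_trans wb _; rewrite linkedC.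
Qed.

Lemma ext_i_unlinked v a b : edge_injections e i -> is_internal e v ->
  a != v -> b != v -> ~~ linked v a b -> ext_i e i v a <> ext_i e i v b.
Proof.
move=> inj v_int a_neq b_neq ab; rewrite /ext_i.
case: pickP => [wa /andP[vwa wa_a]|no_branch]; last first.
  by have [w vw wa] := exists_branch tree a_neq; move: (no_branch w); rewrite /in_branch vw wa.
case: pickP => [wb /andP[vwb wb_b]|no_branch]; last first.
  by have [w vw wb] := exists_branch tree b_neq; move: (no_branch w); rewrite /in_branch vw wb.
move=> /(inj v v_int wa wb vwa vwb) wa_eq_wb; move/negP: ab; apply.
by apply: (connect_trans _ wb_b); rewrite -wa_eq_wb linkedC.
Qed.

End ExtendedInjections.

Theorem lemma4p9 (R : realType) (V : finType) (e : rel V)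
    (i : V -> V -> sphere R)
    (x : nat -> V -> sphere R) (phi : nat -> V -> moebius R) (v v' : V) :
  is_tree e ->
  stable_tree e ->
  (3 <= #|[set a | is_leaf e a]|)%N ->
  edge_injections e i ->
  (forall n, marked_sphere e (x n)) ->
  is_internal e v -> is_internal e v' -> v != v' ->
  converges_via e i x phi ->
  loc_unif_cvg_const
    (fun n => mob_apply (phi n v') \o mob_apply (mob_inv (phi n v)))
    (ext_i e i v v') (ext_i e i v' v).
Proof.
(* Stability alone provides the leaves needed. *)
move=> tree stable _ inj _ v_int v'_int v_neq_v' cvg.
have v'_neq_v : v' != v by rewrite eq_sym.
have [a [b [a_leaf b_leaf ab av' bv']]] := leaves_off_branch tree v' stable v_int.
have [c [_ [c_leaf _ _ cv _]]] := leaves_off_branch tree v stable v'_int.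
have [a_v a_v'] := (leaf_neq_internal a_leaf v_int, leaf_neq_internal a_leaf v'_int).
have [b_v b_v'] := (leaf_neq_internal b_leaf v_int, leaf_neq_internal b_leaf v'_int).
have [c_v c_v'] := (leaf_neq_internal c_leaf v_int, leaf_neq_internal c_leaf v'_int).
have a_at_v' : ext_i e i v' a = ext_i e i v' v by apply/ext_i_linked/linked_swap.
have b_at_v' : ext_i e i v' b = ext_i e i v' v by apply/ext_i_linked/linked_swap.
have c_at_v : ext_i e i v c = ext_i e i v v' by apply/ext_i_linked/linked_swap.
have ab_at_v : ext_i e i v a <> ext_i e i v b by apply: ext_i_unlinked.
have vc_at_v' : ext_i e i v' v <> ext_i e i v' c.
  by apply: ext_i_unlinked; rewrite // linkedC.
have := cvg v v_int a a_leaf; have := cvg v v_int b b_leaf; have := cvg v v_int c c_leaf.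
have := cvg v' v'_int a a_leaf; have := cvg v' v'_int b b_leaf; have := cvg v' v'_int c c_leaf.
rewrite c_at_v a_at_v' b_at_v' => gc gb ga fc fb fa.
exact: mob_comp_loc_unif_cvg ab_at_v vc_at_v' fa fb fc ga gb gc.
Qed.
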